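(* There exists a continuous non-negative function $f$ on $[0,1)$ with $f(0)=0$ such that the following holds for every $n$. Let $0\le \mathcal{K}<1$ and let $\gamma:[a,b]\to\mathbb{H}^n$ be a unit speed path whose geodesic curvature satisfies $\kappa_\gamma(t)\le\mathcal{K}$ for all $t\in[a,b]$. Then $\gamma$ is a $\frac{1}{\sqrt{1-\mathcal{K}^2}}$-quasi-geodesic, and if $g_\gamma$ is the geodesic segment joining $\gamma(a)$ and $\gamma(b)$, then the Hausdorff distance between the image of $\gamma$ and the image of $g_\gamma$ is at most $f(\mathcal{K})$.
   Context: For a unit speed path $\gamma$ in a Riemannian manifold, the geodesic curvature is $\kappa_\gamma(t)=\big\|\frac{D\dot\gamma}{dt}(t)\big\|$, where $\frac{D}{dt}$ is the covariant derivative along $\gamma$. A map $\gamma:I\to X$ from an interval to a metric space is a $k$-quasi-geodesic if $\frac1k|s-t|\le d(\gamma(s),\gamma(t))\le k|s-t|$ for all $s,t\in I$. *)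

From Stdlib Require Import Reals Lra.
From Coquelicot Require Import Coquelicot.
Open Scope R_scope.

(* Points of R^{n+1} are functions nat -> R; only coordinates 0..n matter. *)
Definition point := nat -> R.

Fixpoint space_part (n : nat) (x y : point) : R :=
  match n with
  | O => 0
  | S m => space_part m x y + x (S m) * y (S m)
  end.

Definition mink (n : nat) (x y : point) : R := - x 0%nat * y 0%nat + space_part n x y.

Definition inH (n : nat) (x : point) : Prop := mink n x x = -1 /\ 0 < x 0%nat.

Definition acosh (z : R) : R := ln (z + sqrt (z * z - 1)).

Definition hdist (n : nat) (x y : point) : R := acosh (- mink n x y).

(* unit-speed parametrisation of the geodesic from x to y, s in [0, d(x,y)] *)
Definition geod_pt (n : nat) (x y : point) (s : R) : point :=
  fun i => cosh s * x i
           + sinh s * ((y i - cosh (hdist n x y) * x i) / sinh (hdist n x y)).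

Definition geodesic_segment_image (n : nat) (x y : point) (p : point) : Prop :=
  exists s, 0 <= s <= hdist n x y /\ p = geod_pt n x y s.

Definition path_image (gamma : R -> point) (a b : R) (p : point) : Prop :=
  exists t, a <= t <= b /\ p = gamma t.

(* covariant derivative of gamma' along gamma (Levi-Civita connection of the
   hyperboloid = tangential projection of the ambient derivative gamma''):
   v + <v,gamma> gamma is the orthogonal projection of v onto T_gamma H^n *)
Definition cov_accel (n : nat) (gamma gamma2 : R -> point) (t : R) : point :=
  fun i => gamma2 t i + mink n (gamma2 t) (gamma t) * gamma t i.

Definition geod_curvature (n : nat) (gamma gamma2 : R -> point) (t : R) : R :=
  sqrt (mink n (cov_accel n gamma gamma2 t) (cov_accel n gamma gamma2 t)).

Definition quasi_geodesic (n : nat) (k : R) (gamma : R -> point) (a b : R) : Prop :=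
  forall s t, a <= s <= b -> a <= t <= b ->
    / k * Rabs (s - t) <= hdist n (gamma s) (gamma t) <= k * Rabs (s - t).

Definition hausdorff_dist_le (n : nat) (A B : point -> Prop) (c : R) : Prop :=
  (forall p, A p -> forall eps, 0 < eps -> exists q, B q /\ hdist n p q < c + eps) /\
  (forall q, B q -> forall eps, 0 < eps -> exists p, A p /\ hdist n q p < c + eps).

From Stdlib Require Import Reals Lra Psatz.
From Coquelicot Require Import Coquelicot.
Open Scope R_scope.

(* Write [u(σ) = cosh d(γ(s), γ(σ))].  Along a unit-speed curve [u'' = u - <N, γ(s)>],
   where [N] is the covariant acceleration, and [|N| <= K] bounds the error term by
   [K sqrt (u^2 - 1 - u'^2)].  A continuity argument then shows that [acosh u] grows
   with speed at least [sqrt (1 - K^2)] and at most [1]: the quasi-geodesic bound.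

   For the Hausdorff bound, the height [<γ(t), z>] of the curve above a hyperplane
   [z^perp] obeys a maximum principle: it cannot exceed [sinh r], where [tanh r = K],
   unless it does so at an endpoint.  Applied to the hyperplanes containing the
   geodesic through [γ(a)] and [γ(b)], and to those orthogonal to it at its ends, this
   confines each point of the curve to within [acosh (sqrt (1 + 2 sinh^2 r))] of the
   geodesic segment, and conversely. *)

(** * The Minkowski form *)

Section Minkowski.
Variable n : nat.

Lemma space_part_sym x y : space_part n x y = space_part n y x.
Proof. induction n as [|m IH]; simpl; [lra | rewrite IH; ring]. Qed.

Lemma space_part_addl u v w :
  space_part n (fun i => u i + v i) w = space_part n u w + space_part n v w.
Proof. induction n as [|m IH]; simpl; [lra | rewrite IH; ring]. Qed.

Lemma space_part_scall c u w : space_part n (fun i => c * u i) w = c * space_part n u w.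
Proof. induction n as [|m IH]; simpl; [lra | rewrite IH; ring]. Qed.

Lemma space_part_self_ge0 x : 0 <= space_part n x x.
Proof. induction n; simpl; nra. Qed.

Lemma mink_sym x y : mink n x y = mink n y x.
Proof. unfold mink; rewrite space_part_sym; ring. Qed.

Lemma mink_addl u v w : mink n (fun i => u i + v i) w = mink n u w + mink n v w.
Proof. unfold mink; rewrite space_part_addl; ring. Qed.

Lemma mink_scall c u w : mink n (fun i => c * u i) w = c * mink n u w.
Proof. unfold mink; rewrite space_part_scall; ring. Qed.

Lemma mink_addr u v w : mink n w (fun i => u i + v i) = mink n w u + mink n w v.
Proof. rewrite !(mink_sym w); apply mink_addl. Qed.

Lemma mink_scalr c u w : mink n w (fun i => c * u i) = c * mink n w u.
Proof. rewrite !(mink_sym w); apply mink_scall. Qed.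

Lemma mink_combl c u d v w :
  mink n (fun i => c * u i + d * v i) w = c * mink n u w + d * mink n v w.
Proof. rewrite mink_addl, !mink_scall; reflexivity. Qed.

Lemma mink_combr c u d v w :
  mink n w (fun i => c * u i + d * v i) = c * mink n w u + d * mink n w v.
Proof. rewrite mink_addr, !mink_scalr; reflexivity. Qed.

Lemma space_part_ext x x' y y' :
  (forall i, (i <= n)%nat -> x i = x' i) -> (forall i, (i <= n)%nat -> y i = y' i) ->
  space_part n x y = space_part n x' y'.
Proof.
  induction n as [|m IH]; intros Hx Hy; simpl; [reflexivity|].
  rewrite IH, Hx, Hy by auto; reflexivity.
Qed.

Lemma mink_ext x x' y y' :
  (forall i, (i <= n)%nat -> x i = x' i) -> (forall i, (i <= n)%nat -> y i = y' i) ->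
  mink n x y = mink n x' y'.
Proof.
  intros Hx Hy; unfold mink; rewrite Hx, Hy, (space_part_ext x x' y y') by (auto || lia).
  reflexivity.
Qed.

Lemma space_part_zeror x : space_part n x (fun _ => 0) = 0.
Proof. induction n as [|m IH]; simpl; [reflexivity | rewrite IH; ring]. Qed.

Lemma mink_zeror x : mink n x (fun _ => 0) = 0.
Proof. unfold mink; rewrite space_part_zeror; ring. Qed.

Lemma space_part_quad x y l :
  space_part n (fun i => x i + l * y i) (fun i => x i + l * y i)
  = space_part n x x + 2 * l * space_part n x y + l * l * space_part n y y.
Proof. induction n as [|m IH]; simpl; [ring | rewrite IH; ring]. Qed.

Lemma mink_quad x y l :
  mink n (fun i => x i + l * y i) (fun i => x i + l * y i)
  = mink n x x + 2 * l * mink n x y + l * l * mink n y y.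
Proof. unfold mink; rewrite space_part_quad; ring. Qed.

Lemma discriminant_le A B C :
  0 <= C -> (forall l, 0 <= A - 2 * B * l + C * l * l) -> B * B <= A * C.
Proof.
  intros HC Hq.
  destruct (Req_dec C 0) as [->|HC0].
  - destruct (Req_dec B 0) as [->|HB]; [nra|].
    specialize (Hq ((A + 1) / (2 * B))).
    replace (A - 2 * B * ((A + 1) / (2 * B)) + 0 * ((A + 1) / (2 * B)) * ((A + 1) / (2 * B)))
      with (-1) in Hq by (field; auto); lra.
  - specialize (Hq (B / C)).
    replace (A - 2 * B * (B / C) + C * (B / C) * (B / C)) with ((A * C - B * B) / C) in Hq
      by (field; auto).
    assert (Hdisc : 0 <= (A * C - B * B) / C * C) by (apply Rmult_le_pos; lra).
    replace ((A * C - B * B) / C * C) with (A * C - B * B) in Hdisc by (field; auto); lra.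
Qed.

Lemma space_part_cauchy_schwarz x y :
  space_part n x y * space_part n x y <= space_part n x x * space_part n y y.
Proof.
  apply discriminant_le; [apply space_part_self_ge0|]; intros l.
  pose proof (space_part_self_ge0 (fun i => x i + (- l) * y i)) as Hl.
  rewrite space_part_quad in Hl; nra.
Qed.

Lemma mink_self_ge0_of_orth g X :
  mink n g g = -1 -> mink n X g = 0 -> 0 <= mink n X X.
Proof.
  unfold mink; intros Hg HXg.
  pose proof (space_part_cauchy_schwarz X g).
  pose proof (space_part_self_ge0 X); pose proof (space_part_self_ge0 g).
  assert (HX0 : X 0%nat * X 0%nat * (1 + space_part n g g) <= space_part n X X * (1 + space_part n g g)) by nra.
  assert (X 0%nat * X 0%nat <= space_part n X X) by (apply Rmult_le_reg_r with (1 + space_part n g g); lra).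
  lra.
Qed.

Lemma mink_cauchy_schwarz_orth g X Y :
  mink n g g = -1 -> mink n X g = 0 -> mink n Y g = 0 ->
  mink n X Y * mink n X Y <= mink n X X * mink n Y Y.
Proof.
  intros Hg HX HY; apply discriminant_le; [exact (mink_self_ge0_of_orth g Y Hg HY)|].
  intros l.
  assert (Horth : mink n (fun i => X i + - l * Y i) g = 0)
    by (rewrite mink_addl, mink_scall, HX, HY; ring).
  pose proof (mink_self_ge0_of_orth g _ Hg Horth) as Hl; rewrite mink_quad in Hl; nra.
Qed.

(* Reversed Cauchy-Schwarz: [p0 q0 = sqrt ((1 + |p|^2) (1 + |q|^2)) >= 1 + |p| |q|]. *)
Lemma mink_opp_ge1 p q : inH n p -> inH n q -> 1 <= - mink n p q.
Proof.
  unfold inH, mink; intros [Hp Hp0] [Hq Hq0].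
  pose proof (space_part_cauchy_schwarz p q).
  pose proof (space_part_self_ge0 p); pose proof (space_part_self_ge0 q).
  set (P := space_part n p p) in *; set (Q := space_part n q q) in *;
  set (S := space_part n p q) in *.
  assert (Hpp : p 0%nat * p 0%nat = 1 + P) by lra.
  assert (Hqq : q 0%nat * q 0%nat = 1 + Q) by lra.
  replace (- (- p 0%nat * q 0%nat + S)) with (p 0%nat * q 0%nat - S) by ring.
  set (w := p 0%nat * q 0%nat).
  assert (Hw : w * w = (1 + P) * (1 + Q)) by (rewrite <- Hpp, <- Hqq; unfold w; ring).
  assert (Hw0 : 0 < w) by (apply Rmult_lt_0_compat; lra).
  clearbody w P Q S.
  assert (Hww : 1 <= w * w) by (rewrite Hw; nra).
  assert (Hw1 : 1 <= w) by (clear - Hw0 Hww; nra).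
  destruct (Rle_lt_dec S 0) as [HS|HS]; [lra|].
  assert (2 * S <= P + Q).
  { apply Rnot_lt_le; intros Hlt.
    assert ((P + Q) * (P + Q) < 4 * (S * S)) by nra.
    assert (0 <= (P - Q) * (P - Q)) by apply Rle_0_sqr.
    nra. }
  assert ((1 + S) * (1 + S) <= w * w) by nra.
  nra.
Qed.

End Minkowski.

(** * Calculus on the line *)

Lemma is_derive_space_part n (u v : R -> point) (u' v' : point) t :
  (forall i, (i <= n)%nat -> is_derive (fun s => u s i) t (u' i)) ->
  (forall i, (i <= n)%nat -> is_derive (fun s => v s i) t (v' i)) ->
  is_derive (fun s => space_part n (u s) (v s)) t (space_part n u' (v t) + space_part n (u t) v').
Proof.
  induction n as [|m IH]; intros Hu Hv; simpl.
  - replace (0 + 0) with 0 by ring; exact (is_derive_const _ _).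
  - replace (space_part m u' (v t) + u' (S m) * v t (S m) + (space_part m (u t) v' + u t (S m) * v' (S m)))
      with ((space_part m u' (v t) + space_part m (u t) v')
            + (u' (S m) * v t (S m) + u t (S m) * v' (S m))) by ring.
    apply (is_derive_plus (fun s => space_part m (u s) (v s)) (fun s => u s (S m) * v s (S m)));
      [apply IH; auto|].
    apply (is_derive_mult (fun s => u s (S m)) (fun s => v s (S m))); auto.
    intros; apply Rmult_comm.
Qed.

Lemma is_derive_mink n (u v : R -> point) (u' v' : point) t :
  (forall i, (i <= n)%nat -> is_derive (fun s => u s i) t (u' i)) ->
  (forall i, (i <= n)%nat -> is_derive (fun s => v s i) t (v' i)) ->
  is_derive (fun s => mink n (u s) (v s)) t (mink n u' (v t) + mink n (u t) v').
Proof.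
  intros Hu Hv; unfold mink.
  replace (- u' 0%nat * v t 0%nat + space_part n u' (v t) + (- u t 0%nat * v' 0%nat + space_part n (u t) v'))
    with (- (u' 0%nat * v t 0%nat + u t 0%nat * v' 0%nat)
          + (space_part n u' (v t) + space_part n (u t) v')) by ring.
  apply (is_derive_ext (fun s => - (u s 0%nat * v s 0%nat) + space_part n (u s) (v s)));
    [intros; rewrite Ropp_mult_distr_l; reflexivity|].
  apply (is_derive_plus (fun s => - (u s 0%nat * v s 0%nat)) (fun s => space_part n (u s) (v s)));
    [|apply is_derive_space_part; auto].
  apply (is_derive_opp (fun s => u s 0%nat * v s 0%nat)).
  apply (is_derive_mult (fun s => u s 0%nat) (fun s => v s 0%nat)); auto with arith.
  intros; apply Rmult_comm.
Qed.

Lemma is_derive_mink_const n (u : R -> point) (u' z : point) t :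
  (forall i, (i <= n)%nat -> is_derive (fun s => u s i) t (u' i)) ->
  is_derive (fun s => mink n (u s) z) t (mink n u' z).
Proof.
  intros Hu.
  replace (mink n u' z) with (mink n u' z + mink n (u t) (fun _ => 0)) by (rewrite mink_zeror; ring).
  apply (is_derive_mink n u (fun _ => z)); auto; intros; exact (is_derive_const _ _).
Qed.

Lemma continuity_pt_of_is_derive (f : R -> R) t l : is_derive f t l -> continuity_pt f t.
Proof.
  intros Hd; apply continuity_pt_filterlim, (ex_derive_continuous f t); exists l; exact Hd.
Qed.

Lemma continuity_pt_pos_near (f : R -> R) x : continuity_pt f x -> 0 < f x ->
  exists alp, 0 < alp /\ forall y, Rabs (y - x) < alp -> 0 < f y.
Proof.
  intros Hc Hf; destruct (Hc (f x) Hf) as (alp & Halp & Hy).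
  exists alp; split; [exact Halp|]; intros y Hyx.
  destruct (Req_dec y x) as [->|Hne]; [exact Hf|].
  assert (Hd : R_dist (f y) (f x) < f x) by (apply Hy; repeat split; auto).
  unfold R_dist in Hd; apply Rabs_def2 in Hd; lra.
Qed.

Lemma is_derive_pos_locally_increasing (f : R -> R) t l : is_derive f t l -> 0 < l ->
  exists d, 0 < d /\ forall h, 0 < h < d -> f (t - h) < f t < f (t + h).
Proof.
  intros Hd Hl; apply is_derive_Reals in Hd; destruct (Hd l Hl) as [d Hdd].
  exists d; split; [destruct d; simpl; lra|]; intros h Hh.
  pose proof (Hdd h ltac:(lra) ltac:(rewrite Rabs_right; lra)) as Hr.
  pose proof (Hdd (- h) ltac:(lra) ltac:(rewrite Rabs_Ropp, Rabs_right; lra)) as Hl'.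
  apply Rabs_def2 in Hr; apply Rabs_def2 in Hl'.
  assert (Hr' : 0 < (f (t + h) - f t) / h * h) by (apply Rmult_lt_0_compat; lra).
  assert (Hl'' : 0 < (f (t + - h) - f t) / - h * h) by (apply Rmult_lt_0_compat; lra).
  replace ((f (t + h) - f t) / h * h) with (f (t + h) - f t) in Hr' by (field; lra).
  replace ((f (t + - h) - f t) / - h * h) with (f t - f (t - h)) in Hl'' by (unfold Rminus; field; lra).
  lra.
Qed.

Lemma exists_pos_lt_both d r : 0 < d -> 0 < r -> exists h, 0 < h /\ h < d /\ h < r.
Proof.
  intros Hd Hr; exists (Rmin d r / 2).
  pose proof (Rmin_l d r); pose proof (Rmin_r d r); assert (0 < Rmin d r) by (apply Rmin_case; lra); lra.
Qed.

Lemma lt_of_sq_lt x y : 0 < y -> x * x < y * y -> x < y.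
Proof. intros Hy Hsq; apply Rnot_le_lt; intros Hle; nra. Qed.

Lemma sqrt_ge1 r : 1 <= r -> 1 <= sqrt r.
Proof. intros Hr; rewrite <- sqrt_1; apply sqrt_le_1_alt; exact Hr. Qed.

Lemma is_derive_not_pos_of_const_on (f : R -> R) a b c t l :
  a < b -> a <= t <= b -> (forall s, a <= s <= b -> f s = c) -> is_derive f t l -> ~ 0 < l.
Proof.
  intros Hab Ht Hc Hd Hl.
  destruct (is_derive_pos_locally_increasing f t l Hd Hl) as (d & Hd0 & Hinc).
  destruct (Rlt_le_dec t b) as [Htb|Htb].
  - destruct (exists_pos_lt_both d (b - t)) as (h & ? & ? & ?); [lra..|].
    destruct (Hinc h) as [_ Hlt]; [lra|]; rewrite !Hc in Hlt; lra.
  - destruct (exists_pos_lt_both d (t - a)) as (h & ? & ? & ?); [lra..|].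
    destruct (Hinc h) as [Hlt _]; [lra|]; rewrite !Hc in Hlt; lra.
Qed.

Lemma is_derive_zero_of_const_on (f : R -> R) a b c t l :
  a < b -> a <= t <= b -> (forall s, a <= s <= b -> f s = c) -> is_derive f t l -> l = 0.
Proof.
  intros Hab Ht Hc Hd.
  pose proof (is_derive_not_pos_of_const_on f a b c t l Hab Ht Hc Hd).
  assert (Hopp : ~ 0 < - l).
  { apply (is_derive_not_pos_of_const_on (fun s => - f s) a b (- c) t); auto.
    - intros s Hs; rewrite Hc; auto.
    - apply (is_derive_opp f); exact Hd. }
  lra.
Qed.

Lemma second_derive_pos_not_max (v v1 : R -> R) a b t l :
  a < t < b -> (forall s, a <= s <= b -> is_derive v s (v1 s)) -> is_derive v1 t l -> 0 < l ->
  exists s, a <= s <= b /\ v t < v s.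
Proof.
  intros Ht Hd Hd1 Hl.
  destruct (is_derive_pos_locally_increasing v1 t l Hd1 Hl) as (d & Hd0 & Hinc).
  assert (Hmvt : forall s1 s2, a <= s1 < s2 -> s2 <= b ->
            exists c, v s2 - v s1 = v1 c * (s2 - s1) /\ s1 < c < s2)
    by (intros s1 s2 Hs1 Hs2; apply MVT_cor2; [lra|];
        intros c Hc; apply is_derive_Reals, Hd; lra).
  destruct (Rle_lt_dec 0 (v1 t)) as [Hpos|Hneg].
  - destruct (exists_pos_lt_both d (b - t)) as (h & ? & ? & ?); [lra..|].
    exists (t + h); split; [lra|].
    destruct (Hmvt t (t + h)) as (c & Hc & Hct); [lra..|].
    destruct (Hinc (c - t)) as [_ Hv1]; [lra|]; replace (t + (c - t)) with c in Hv1 by ring.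
    assert (0 < v1 c * (t + h - t)) by (apply Rmult_lt_0_compat; lra); lra.
  - destruct (exists_pos_lt_both d (t - a)) as (h & ? & ? & ?); [lra..|].
    exists (t - h); split; [lra|].
    destruct (Hmvt (t - h) t) as (c & Hc & Hct); [lra..|].
    destruct (Hinc (t - c)) as [Hv1 _]; [lra|]; replace (t - (t - c)) with c in Hv1 by ring.
    assert (0 < - v1 c * (t - (t - h))) by (apply Rmult_lt_0_compat; lra); lra.
Qed.

Lemma IVT_closed (f : R -> R) a b : a < b -> (forall t, a <= t <= b -> continuity_pt f t) ->
  f a <= 0 -> 0 <= f b -> exists t, a <= t <= b /\ f t = 0.
Proof.
  intros Hab Hf Ha Hb.
  destruct (Req_dec (f a) 0) as [Ha0|Ha0]; [exists a; split; [lra|exact Ha0]|].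
  destruct (Req_dec (f b) 0) as [Hb0|Hb0]; [exists b; split; [lra|exact Hb0]|].
  destruct (Ranalysis5.IVT_interv f a b Hf Hab) as (t & Ht & Hft); [lra..|].
  exists t; auto.
Qed.

Lemma positive_on_of_no_first_zero (F : R -> R) s b :
  (forall σ, s < σ <= b -> continuity_pt F σ) ->
  (exists δ, 0 < δ /\ forall σ, s < σ < s + δ -> σ <= b -> 0 < F σ) ->
  (forall σ, s < σ <= b -> (forall τ, s < τ < σ -> 0 < F τ) -> F σ <> 0) ->
  forall σ, s < σ <= b -> 0 < F σ.
Proof.
  intros Hcont (δ & Hδ & Hinit) Hzero σ0 Hσ0.
  set (E := fun τ => τ <= b /\ forall σ, s < σ <= τ -> 0 < F σ).
  destruct (exists_pos_lt_both δ (b - s)) as (h1 & ? & ? & ?); [lra..|].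
  assert (HE1 : E (s + h1)) by (split; [lra|intros σ Hσ; apply Hinit; lra]).
  destruct (completeness E) as (T & HTub & HTlub).
  { exists b; intros τ Hτ; apply Hτ. }
  { exists (s + h1); exact HE1. }
  assert (HsT : s < T) by (pose proof (HTub _ HE1); lra).
  assert (HTb : T <= b) by (apply HTlub; intros τ Hτ; apply Hτ).
  assert (Hbelow : forall σ, s < σ < T -> 0 < F σ).
  { intros σ Hσ; apply Rnot_le_lt; intros Hle.
    assert (T <= σ); [|lra].
    apply HTlub; intros τ [_ Hτ]; apply Rnot_lt_le; intros Hστ.
    pose proof (Hτ σ ltac:(lra)); lra. }
  assert (HFT : 0 < F T).
  { destruct (Rtotal_order (F T) 0) as [Hlt|[Heq|Hgt]]; [exfalso| |exact Hgt].
    - destruct (continuity_pt_pos_near (fun σ => - F σ) T) as (α & Hα & Hneg);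
        [apply (continuity_pt_opp F), Hcont; lra|lra|].
      destruct (exists_pos_lt_both α (T - s)) as (h & ? & ? & ?); [lra..|].
      pose proof (Hneg (T - h) ltac:(rewrite Rabs_left; lra)); pose proof (Hbelow (T - h) ltac:(lra)).
      lra.
    - exfalso; exact (Hzero T ltac:(lra) Hbelow Heq). }
  assert (HTeqb : T = b).
  { destruct (Rle_lt_dec b T) as [|HTb']; [lra|exfalso].
    destruct (continuity_pt_pos_near F T) as (α & Hα & Hpos); [apply Hcont; lra|exact HFT|].
    destruct (exists_pos_lt_both α (b - T)) as (h & ? & ? & ?); [lra..|].
    assert (HE2 : E (T + h)).
    { split; [lra|]; intros σ Hσ.
      destruct (Rlt_le_dec σ T); [apply Hbelow; lra|].
      apply Hpos; rewrite Rabs_right; lra. }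
    pose proof (HTub _ HE2); lra. }
  destruct (Rlt_le_dec σ0 T) as [Hlt|Hle]; [apply Hbelow; lra|].
  replace σ0 with T by lra; exact HFT.
Qed.

(** * Hyperbolic functions *)

Lemma cosh_sq_sub_sinh_sq x : cosh x * cosh x - sinh x * sinh x = 1.
Proof. unfold cosh, sinh; rewrite exp_Ropp; pose proof (exp_pos x); field; lra. Qed.

Lemma sinh_sub x y : sinh (x - y) = sinh x * cosh y - cosh x * sinh y.
Proof.
  unfold cosh, sinh, Rminus; rewrite exp_plus, !exp_Ropp, exp_plus, exp_Ropp.
  pose proof (exp_pos x); pose proof (exp_pos y); field; lra.
Qed.

Lemma sinh_ge0 x : 0 <= x -> 0 <= sinh x.
Proof.
  intros Hx; unfold sinh.
  destruct (Req_dec x 0) as [->|Hx0]; [rewrite Ropp_0; lra|].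
  assert (exp (- x) < exp x) by (apply exp_increasing; lra); lra.
Qed.

Lemma exp_acosh z : 1 <= z -> exp (acosh z) = z + sqrt (z * z - 1).
Proof. intros; unfold acosh; apply exp_ln; pose proof (sqrt_pos (z * z - 1)); lra. Qed.

Lemma exp_opp_acosh z : 1 <= z -> exp (- acosh z) = z - sqrt (z * z - 1).
Proof.
  intros Hz; rewrite exp_Ropp, exp_acosh by exact Hz.
  pose proof (sqrt_sqrt (z * z - 1) ltac:(nra)); pose proof (sqrt_pos (z * z - 1)).
  apply Rmult_eq_reg_l with (z + sqrt (z * z - 1)); [|lra].
  rewrite Rinv_r by lra; nra.
Qed.

Lemma cosh_acosh z : 1 <= z -> cosh (acosh z) = z.
Proof. intros; unfold cosh; rewrite exp_acosh, exp_opp_acosh by auto; field. Qed.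

Lemma sinh_acosh z : 1 <= z -> sinh (acosh z) = sqrt (z * z - 1).
Proof. intros; unfold sinh; rewrite exp_acosh, exp_opp_acosh by auto; field. Qed.

Lemma acosh_1 : acosh 1 = 0.
Proof. unfold acosh; replace (1 * 1 - 1) with 0 by ring; rewrite sqrt_0, Rplus_0_r; apply ln_1. Qed.

Lemma acosh_pos z : 1 < z -> 0 < acosh z.
Proof.
  intros Hz; unfold acosh; rewrite <- ln_1.
  apply ln_increasing; [lra|]; pose proof (sqrt_pos (z * z - 1)); lra.
Qed.

(* [acosh z] is junk (at most [0]) for [z < 1]: [ln] and [sqrt] are clamped there. *)
Lemma acosh_le_acosh z M : 1 <= M -> z <= M -> acosh z <= acosh M.
Proof.
  intros HM Hz; unfold acosh.
  assert (HlnM : 0 <= ln (M + sqrt (M * M - 1))).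
  { rewrite <- ln_1; apply ln_le; [lra|]; pose proof (sqrt_pos (M * M - 1)); lra. }
  destruct (Rlt_le_dec z 1) as [Hz1|Hz1].
  - assert (Hw : z + sqrt (z * z - 1) < 1).
    { destruct (Rle_lt_dec (z * z - 1) 0) as [Hneg|Hpos].
      - rewrite sqrt_neg_0 by exact Hneg; lra.
      - assert (z < -1) by nra.
        assert (sqrt (z * z - 1) < - z)
          by (rewrite <- (sqrt_square (- z)) by lra; apply sqrt_lt_1_alt; nra).
        lra. }
    apply Rle_trans with 0; [|exact HlnM].
    destruct (Rle_lt_dec (z + sqrt (z * z - 1)) 0) as [Hw0|Hw0].
    + unfold ln; destruct (Rlt_dec 0 (z + sqrt (z * z - 1))); [exfalso; lra|lra].
    + rewrite <- ln_1; left; apply ln_increasing; lra.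
  - apply ln_le; [pose proof (sqrt_pos (z * z - 1)); lra|].
    apply Rplus_le_compat; [exact Hz|]; apply sqrt_le_1_alt; nra.
Qed.

Lemma is_derive_acosh z : 1 < z -> is_derive acosh z (/ sqrt (z * z - 1)).
Proof.
  intros Hz; unfold acosh.
  assert (Hs : 0 < sqrt (z * z - 1)) by (apply sqrt_lt_R0; nra).
  auto_derive; replace (z * z + - (1)) with (z * z - 1) by ring.
  - repeat split; nra.
  - field; split; lra.
Qed.

Lemma continuity_pt_acosh z : 1 <= z -> continuity_pt acosh z.
Proof.
  intros Hz; unfold acosh.
  apply (continuity_pt_comp (fun z => z + sqrt (z * z - 1)) ln).
  - apply (continuity_pt_plus (fun z => z) (fun z => sqrt (z * z - 1))); [apply continuity_pt_id|].
    apply (continuity_pt_comp (fun z => z * z - 1) sqrt); [|apply continuity_pt_sqrt; nra].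
    apply (continuity_pt_minus (fun z => z * z) (fun _ => 1));
      [apply (continuity_pt_mult (fun z => z) (fun z => z)); apply continuity_pt_id|apply continuity_pt_const; intros ? ?; reflexivity].
  - apply (continuity_pt_of_is_derive ln _ (/ (z + sqrt (z * z - 1)))), is_derive_Reals, derivable_pt_lim_ln.
    pose proof (sqrt_pos (z * z - 1)); lra.
Qed.

Lemma hdist_sym n x y : hdist n x y = hdist n y x.
Proof. unfold hdist; rewrite mink_sym; reflexivity. Qed.

Lemma hdist_self n p : inH n p -> hdist n p p = 0.
Proof. intros [Hp _]; unfold hdist; rewrite Hp; replace (- -1) with 1 by ring; apply acosh_1. Qed.

Lemma acosh_le_of_sq_le z r : 1 <= r -> z * z <= r -> acosh z <= acosh (sqrt r).
Proof.
  intros Hr Hz; apply acosh_le_acosh; [exact (sqrt_ge1 r Hr)|]. apply Rle_trans with (Rabs z); [apply Rle_abs|].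
  rewrite <- sqrt_Rsqr_abs; apply sqrt_le_1_alt; unfold Rsqr; exact Hz.
Qed.

(** * Growth of the distance along a curve *)

(* [u] stands for the cosh of the distance to the point at parameter [s] along a
   unit-speed curve, so that [acosh u] has derivative [u1 / sh]; [u2_close] is what
   the curvature bound gives for [u'' = u2]. *)
Section AcoshGrowth.
Variables (K s b : R) (u u1 u2 : R -> R).
Hypothesis K_range : 0 <= K < 1.
Hypothesis s_le_b : s <= b.
Hypothesis u_derive : forall σ, s <= σ <= b -> is_derive u σ (u1 σ).
Hypothesis u1_derive : forall σ, s <= σ <= b -> is_derive u1 σ (u2 σ).
Hypothesis u_ge1 : forall σ, s <= σ <= b -> 1 <= u σ.
Hypothesis u_base : u s = 1.
Hypothesis u1_base : u1 s = 0.
Hypothesis u1_sq_le : forall σ, s <= σ <= b -> u1 σ * u1 σ <= u σ * u σ - 1.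
Hypothesis u2_close : forall σ, s <= σ <= b ->
  (u σ - u2 σ) * (u σ - u2 σ) <= K * K * (u σ * u σ - 1 - u1 σ * u1 σ).

Let sh σ := sqrt (u σ * u σ - 1).

Let sh_sq σ : s <= σ <= b -> sh σ * sh σ = u σ * u σ - 1.
Proof. intros Hσ; apply sqrt_sqrt; pose proof (u_ge1 σ Hσ); nra. Qed.

Let sh_ge0 σ : 0 <= sh σ.
Proof. apply sqrt_pos. Qed.

Let sh_base : sh s = 0.
Proof. unfold sh; rewrite u_base; replace (1 * 1 - 1) with 0 by ring; apply sqrt_0. Qed.

Let sh_pos σ : s <= σ <= b -> 1 < u σ -> 0 < sh σ.
Proof. intros Hσ Hu; apply sqrt_lt_R0; nra. Qed.

Let continuity_pt_sh σ : s <= σ <= b -> continuity_pt sh σ.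
Proof.
  intros Hσ; pose proof (continuity_pt_of_is_derive u σ _ (u_derive σ Hσ)) as Hu.
  apply (continuity_pt_comp (fun σ => u σ * u σ - 1) sqrt).
  - apply (continuity_pt_minus (fun σ => u σ * u σ) (fun _ => 1));
      [apply (continuity_pt_mult u u); exact Hu|apply continuity_pt_const; intros ? ?; reflexivity].
  - apply continuity_pt_sqrt; pose proof (u_ge1 σ Hσ); nra.
Qed.

Let is_derive_sh σ : s <= σ <= b -> 1 < u σ -> is_derive sh σ (u σ * u1 σ / sh σ).
Proof.
  intros Hσ Hu; pose proof (sh_pos σ Hσ Hu).
  replace (u σ * u1 σ / sh σ) with ((u1 σ * u σ + u σ * u1 σ - 0) / (2 * sh σ)) by (field; lra).
  apply (is_derive_sqrt (fun σ => u σ * u σ - 1)); [|nra].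
  apply (is_derive_minus (fun σ => u σ * u σ) (fun _ => 1)); [|exact (is_derive_const _ _)].
  apply (is_derive_mult u u); [apply u_derive; exact Hσ..|intros; apply Rmult_comm].
Qed.

Let u2_base : u2 s = 1.
Proof.
  pose proof (u2_close s ltac:(lra)) as Hs; rewrite u_base, u1_base in Hs; nra.
Qed.

Lemma acosh_u_mvt t : s < t <= b -> (forall σ, s < σ <= t -> 1 < u σ) ->
  exists ξ, s < ξ <= t /\ acosh (u t) = u1 ξ / sh ξ * (t - s).
Proof.
  intros Ht Hu.
  destruct (MVT_gen (fun σ => acosh (u σ)) s t (fun σ => u1 σ / sh σ)) as (ξ & Hξ & Hmvt);
    rewrite Rmin_left, Rmax_right in * by lra.
  - intros σ Hσ; unfold Rdiv.
    apply (is_derive_comp acosh u σ (/ sh σ) (u1 σ)); [apply is_derive_acosh, Hu; lra|apply u_derive; lra].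
  - intros σ Hσ; apply (continuity_pt_comp u acosh).
    + exact (continuity_pt_of_is_derive u σ _ (u_derive σ ltac:(lra))).
    + apply continuity_pt_acosh, u_ge1; lra.
  - rewrite u_base, acosh_1, Rminus_0_r in Hmvt.
    destruct (Req_dec ξ s) as [->|Hξs].
    + rewrite u1_base, Rdiv_0_l, Rmult_0_l in Hmvt.
      pose proof (acosh_pos (u t) (Hu t ltac:(lra))); lra.
    + exists ξ; split; [lra|exact Hmvt].
Qed.

Section Slope.
Variable c : R.
Hypothesis c_pos : 0 < c.
Hypothesis c_sq_lt : c * c < 1 - K * K.

Let gap_sq τ := u1 τ * u1 τ - c * c * (u τ * u τ - 1).

Let is_derive_gap_sq τ : s <= τ <= b -> is_derive gap_sq τ (2 * u1 τ * (u2 τ - c * c * u τ)).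
Proof.
  intros Hτ; unfold gap_sq.
  replace (2 * u1 τ * (u2 τ - c * c * u τ))
    with ((u2 τ * u1 τ + u1 τ * u2 τ) - c * c * ((u1 τ * u τ + u τ * u1 τ) - 0)) by ring.
  apply (is_derive_minus (fun τ => u1 τ * u1 τ) (fun τ => c * c * (u τ * u τ - 1))).
  - apply (is_derive_mult u1 u1); [apply u1_derive; exact Hτ..|intros; apply Rmult_comm].
  - apply (is_derive_scal (fun τ => u τ * u τ - 1)).
    apply (is_derive_minus (fun τ => u τ * u τ) (fun _ => 1)); [|exact (is_derive_const _ _)].
    apply (is_derive_mult u u); [apply u_derive; exact Hτ..|intros; apply Rmult_comm].
Qed.

(* [gap_sq] vanishes at [s]; just after [s] both [u1] (as [u1' s = u2 s = 1]) and
   [u2 - c^2 u] (as [sh] is small) are positive, hence so is its derivative. *)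
Lemma slope_gt_near_base :
  exists δ, 0 < δ /\ forall σ, s < σ < s + δ -> σ <= b -> c * sh σ < u1 σ.
Proof.
  destruct (is_derive_pos_locally_increasing u1 s (u2 s)) as (d & Hd & Hinc);
    [apply u1_derive; lra|rewrite u2_base; lra|].
  destruct (continuity_pt_pos_near (fun σ => (1 - c * c) - sh σ) s) as (α & Hα & Hsh_small).
  { apply (continuity_pt_minus (fun _ => 1 - c * c) sh);
      [apply continuity_pt_const; intros ? ?; reflexivity|apply continuity_pt_sh; lra]. }
  { rewrite sh_base; nra. }
  exists (Rmin d α); split; [apply Rmin_case; lra|]; intros σ Hσ Hσb.
  pose proof (Rmin_l d α); pose proof (Rmin_r d α).
  assert (Hu1pos : forall τ, s < τ <= σ -> 0 < u1 τ).
  { intros τ Hτ; destruct (Hinc (τ - s)) as [_ Hlt]; [lra|].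
    rewrite u1_base in Hlt; replace (s + (τ - s)) with τ in Hlt by ring; exact Hlt. }
  assert (Hgap : 0 < gap_sq σ).
  { destruct (MVT_cor2 gap_sq (fun τ => 2 * u1 τ * (u2 τ - c * c * u τ)) s σ) as (ξ & Hξ & Hsξ);
      [lra|intros; apply is_derive_Reals, is_derive_gap_sq; lra|].
    assert (Hgap0 : gap_sq s = 0) by (unfold gap_sq; rewrite u_base, u1_base; ring).
    assert (Hshξ : sh ξ < 1 - c * c) by (pose proof (Hsh_small ξ ltac:(rewrite Rabs_right; lra)); lra).
    assert (Hξab : s <= ξ <= b) by lra.
    pose proof (u2_close ξ Hξab); pose proof (sh_sq ξ Hξab); pose proof (sh_ge0 ξ);
      pose proof (u_ge1 ξ Hξab); pose proof (Hu1pos ξ ltac:(lra)).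
    assert (HKsh : 0 <= K * sh ξ < (1 - c * c) * u ξ) by (split; nra).
    assert (u ξ - u2 ξ < (1 - c * c) * u ξ)
      by (apply lt_of_sq_lt; [nra|]; apply Rle_lt_trans with ((K * sh ξ) * (K * sh ξ)); nra).
    assert (0 < 2 * u1 ξ * (u2 ξ - c * c * u ξ) * (σ - s))
      by (apply Rmult_lt_0_compat; [apply Rmult_lt_0_compat|]; lra).
    lra. }
  unfold gap_sq in Hgap; rewrite <- sh_sq in Hgap by lra.
  pose proof (sh_ge0 σ); pose proof (Hu1pos σ ltac:(lra)).
  apply lt_of_sq_lt; nra.
Qed.

Lemma u_gt1_of_slope σ : s < σ <= b -> (forall τ, s < τ < σ -> c * sh τ < u1 τ) -> 1 < u σ.
Proof.
  intros Hσ Hslope.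
  destruct (MVT_cor2 u u1 s σ) as (ξ & Hξ & Hsξ); [lra|intros; apply is_derive_Reals, u_derive; lra|].
  pose proof (Hslope ξ Hsξ); pose proof (sh_ge0 ξ).
  assert (0 < u1 ξ * (σ - s)) by (apply Rmult_lt_0_compat; nra). lra.
Qed.

(* At a first zero of [u1 - c sh], [u2_close] makes [u1 - c sh] increasing. *)
Lemma slope_no_first_zero σ : s < σ <= b -> (forall τ, s < τ < σ -> 0 < u1 τ - c * sh τ) ->
  u1 σ - c * sh σ <> 0.
Proof.
  intros Hσ Hpos Hzero.
  assert (Hσab : s <= σ <= b) by lra.
  assert (Hu : 1 < u σ) by (apply (u_gt1_of_slope σ Hσ); intros τ Hτ; pose proof (Hpos τ Hτ); lra).
  pose proof (sh_pos σ Hσab Hu) as HS; pose proof (sh_sq σ Hσab).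
  assert (Hd : is_derive (fun τ => u1 τ - c * sh τ) σ (u2 σ - c * (u σ * u1 σ / sh σ))).
  { apply (is_derive_minus u1 (fun τ => c * sh τ)); [apply u1_derive; exact Hσab|].
    apply (is_derive_scal sh), is_derive_sh; assumption. }
  assert (Hd_pos : 0 < u2 σ - c * (u σ * u1 σ / sh σ)).
  { replace (c * (u σ * u1 σ / sh σ)) with (c * c * u σ)
      by (replace (u1 σ) with (c * sh σ) by lra; field; lra).
    pose proof (u2_close σ Hσab) as Hclose.
    assert (u σ - u2 σ < (1 - c * c) * u σ); [|lra].
    apply lt_of_sq_lt; [nra|].
    replace (u σ * u σ - 1 - u1 σ * u1 σ) with ((1 - c * c) * (sh σ * sh σ)) in Hclose
      by (replace (u1 σ) with (c * sh σ) by lra; nra).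
    apply Rle_lt_trans with (K * K * ((1 - c * c) * (sh σ * sh σ))); [exact Hclose|].
    assert (HP : 0 < (1 - c * c) * (sh σ * sh σ)) by (apply Rmult_lt_0_compat; nra).
    apply Rlt_le_trans with ((1 - c * c) * ((1 - c * c) * (sh σ * sh σ))); [nra|].
    assert (0 <= 1 - c * c) by nra; nra. }
  destruct (is_derive_pos_locally_increasing _ σ _ Hd Hd_pos) as (d & Hd0 & Hinc).
  destruct (exists_pos_lt_both d (σ - s)) as (h & ? & ? & ?); [lra..|].
  destruct (Hinc h) as [Hlt _]; [lra|]; pose proof (Hpos (σ - h) ltac:(lra)); lra.
Qed.

Lemma slope_gt σ : s < σ <= b -> c * sh σ < u1 σ.
Proof.
  intros Hσ.
  enough (0 < u1 σ - c * sh σ) by lra.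
  apply (positive_on_of_no_first_zero (fun σ => u1 σ - c * sh σ) s b); [| |exact slope_no_first_zero|exact Hσ].
  - intros τ Hτ; apply (continuity_pt_minus u1 (fun σ => c * sh σ)).
    + exact (continuity_pt_of_is_derive u1 τ _ (u1_derive τ ltac:(lra))).
    + apply (continuity_pt_scal sh), continuity_pt_sh; lra.
  - destruct slope_gt_near_base as (δ & Hδ & Hnear).
    exists δ; split; [exact Hδ|]; intros τ Hτ Hτb; pose proof (Hnear τ Hτ Hτb); lra.
Qed.

Lemma u_gt1 σ : s < σ <= b -> 1 < u σ.
Proof. intros Hσ; apply (u_gt1_of_slope σ Hσ); intros τ Hτ; apply slope_gt; lra. Qed.

Lemma acosh_u_ge_slope t : s < t <= b -> c * (t - s) <= acosh (u t).
Proof.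
  intros Ht; destruct (acosh_u_mvt t Ht) as (ξ & Hξ & ->); [intros; apply u_gt1; lra|].
  pose proof (slope_gt ξ ltac:(lra)); pose proof (sh_pos ξ ltac:(lra) (u_gt1 ξ ltac:(lra))).
  apply Rmult_le_compat_r; [lra|].
  apply Rmult_le_reg_r with (sh ξ); [lra|]; unfold Rdiv; rewrite Rmult_assoc, Rinv_l; lra.
Qed.

End Slope.

Lemma acosh_u_bounds t : s < t <= b -> sqrt (1 - K * K) * (t - s) <= acosh (u t) <= t - s.
Proof.
  intros Ht.
  assert (Hc : 0 < sqrt (1 - K * K)) by (apply sqrt_lt_R0; nra).
  assert (Hcc : sqrt (1 - K * K) * sqrt (1 - K * K) = 1 - K * K) by (apply sqrt_sqrt; nra).
  set (c := sqrt (1 - K * K)) in *.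
  assert (Hu : forall σ, s < σ <= b -> 1 < u σ) by (intros; apply (u_gt1 (c / 2)); nra).
  split.
  - apply Rnot_lt_le; intros Hlt.
    set (c' := (acosh (u t) / (t - s) + c) / 2).
    assert (Hratio : 0 < acosh (u t) / (t - s) < c).
    { split; [apply Rdiv_lt_0_compat; [apply acosh_pos, Hu|]; lra|].
      apply Rmult_lt_reg_r with (t - s); [lra|]; unfold Rdiv; rewrite Rmult_assoc, Rinv_l; lra. }
    pose proof (acosh_u_ge_slope c' ltac:(unfold c'; lra) ltac:(unfold c'; nra) t Ht).
    assert (c' * (t - s) = (acosh (u t) + c * (t - s)) / 2) by (unfold c'; field; lra).
    lra.
  - destruct (acosh_u_mvt t Ht) as (ξ & Hξ & ->); [intros; apply Hu; lra|].
    pose proof (sh_pos ξ ltac:(lra) (Hu ξ ltac:(lra))); pose proof (sh_sq ξ ltac:(lra)).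
    pose proof (u1_sq_le ξ ltac:(lra)).
    rewrite <- (Rmult_1_l (t - s)) at 2; apply Rmult_le_compat_r; [lra|].
    apply Rmult_le_reg_r with (sh ξ); [lra|]; unfold Rdiv; rewrite Rmult_assoc, Rinv_l by lra.
    apply Rnot_lt_le; intros; nra.
Qed.
End AcoshGrowth.

(** * Curves of geodesic curvature at most [K] *)

(* A hypercycle at distance [r] from a geodesic has geodesic curvature [tanh r];
   for [K = tanh r] this is [sinh r]. *)
Definition sinh_radius (K : R) : R := K / sqrt (1 - K * K).

Lemma sinh_radius_spec K : 0 <= K < 1 ->
  0 <= sinh_radius K /\ K * K * (1 + sinh_radius K * sinh_radius K) = sinh_radius K * sinh_radius K.
Proof.
  intros HK; unfold sinh_radius.
  assert (Hc : 0 < sqrt (1 - K * K)) by (apply sqrt_lt_R0; nra).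
  pose proof (sqrt_sqrt (1 - K * K) ltac:(nra)) as Hcc.
  split; [apply Rdiv_le_0_compat; lra|].
  replace (K / sqrt (1 - K * K) * (K / sqrt (1 - K * K)))
    with (K * K / (sqrt (1 - K * K) * sqrt (1 - K * K))) by (field; lra).
  rewrite Hcc; field; nra.
Qed.

Definition hausdorff_bound (K : R) : R := acosh (sqrt (1 + 2 * (sinh_radius K * sinh_radius K))).

Lemma hyperbolic_rotation_sq A B ch sh : ch * ch - sh * sh = 1 ->
  (A * ch - B * sh) * (A * ch - B * sh) - (B * ch - A * sh) * (B * ch - A * sh) = A * A - B * B.
Proof. intros Hch; transitivity ((A * A - B * B) * (ch * ch - sh * sh)); [ring|rewrite Hch; ring]. Qed.

Section Curve.
Variables (n : nat) (K a b : R) (gamma gamma1 gamma2 : R -> point).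
Hypothesis K_range : 0 <= K < 1.
Hypothesis a_lt_b : a < b.
Hypothesis gamma_inH : forall t, a <= t <= b -> inH n (gamma t).
Hypothesis gamma_derive : forall t i, a <= t <= b -> (i <= n)%nat ->
  is_derive (fun s => gamma s i) t (gamma1 t i).
Hypothesis gamma1_derive : forall t i, a <= t <= b -> (i <= n)%nat ->
  is_derive (fun s => gamma1 s i) t (gamma2 t i).
Hypothesis gamma1_unit : forall t, a <= t <= b -> mink n (gamma1 t) (gamma1 t) = 1.
Hypothesis curvature_le : forall t, a <= t <= b -> geod_curvature n gamma gamma2 t <= K.

Lemma mink_gamma_self t : a <= t <= b -> mink n (gamma t) (gamma t) = -1.
Proof. intros Ht; apply gamma_inH, Ht. Qed.

Lemma is_derive_mink_gamma z t : a <= t <= b ->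
  is_derive (fun s => mink n (gamma s) z) t (mink n (gamma1 t) z).
Proof. intros Ht; apply is_derive_mink_const; intros; apply gamma_derive; auto. Qed.

Lemma is_derive_mink_gamma1 z t : a <= t <= b ->
  is_derive (fun s => mink n (gamma1 s) z) t (mink n (gamma2 t) z).
Proof. intros Ht; apply is_derive_mink_const; intros; apply gamma1_derive; auto. Qed.

Lemma mink_gamma1_gamma t : a <= t <= b -> mink n (gamma1 t) (gamma t) = 0.
Proof.
  intros Ht.
  assert (Hd := is_derive_mink n gamma gamma (gamma1 t) (gamma1 t) t
                  (fun i Hi => gamma_derive t i Ht Hi) (fun i Hi => gamma_derive t i Ht Hi)).
  pose proof (is_derive_zero_of_const_on _ a b (-1) t _ a_lt_b Ht mink_gamma_self Hd) as H0.
  rewrite (mink_sym n (gamma t)) in H0; lra.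
Qed.

Lemma mink_gamma2_gamma1 t : a <= t <= b -> mink n (gamma2 t) (gamma1 t) = 0.
Proof.
  intros Ht.
  assert (Hd := is_derive_mink n gamma1 gamma1 (gamma2 t) (gamma2 t) t
                  (fun i Hi => gamma1_derive t i Ht Hi) (fun i Hi => gamma1_derive t i Ht Hi)).
  pose proof (is_derive_zero_of_const_on _ a b 1 t _ a_lt_b Ht gamma1_unit Hd) as H0.
  rewrite (mink_sym n (gamma1 t)) in H0; lra.
Qed.

Lemma mink_gamma2_gamma t : a <= t <= b -> mink n (gamma2 t) (gamma t) = -1.
Proof.
  intros Ht.
  assert (Hd := is_derive_mink n gamma1 gamma (gamma2 t) (gamma1 t) t
                  (fun i Hi => gamma1_derive t i Ht Hi) (fun i Hi => gamma_derive t i Ht Hi)).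
  pose proof (is_derive_zero_of_const_on _ a b 0 t _ a_lt_b Ht mink_gamma1_gamma Hd) as H0.
  rewrite gamma1_unit in H0 by exact Ht; lra.
Qed.

Let accel t := cov_accel n gamma gamma2 t.

Lemma mink_accel t z : a <= t <= b ->
  mink n (accel t) z = mink n (gamma2 t) z - mink n (gamma t) z.
Proof.
  intros Ht; unfold accel, cov_accel; rewrite mink_addl, mink_scall, mink_gamma2_gamma by exact Ht.
  ring.
Qed.

Lemma mink_accel_gamma t : a <= t <= b -> mink n (accel t) (gamma t) = 0.
Proof. intros Ht; rewrite mink_accel, mink_gamma2_gamma, mink_gamma_self by exact Ht; ring. Qed.

Lemma mink_accel_gamma1 t : a <= t <= b -> mink n (accel t) (gamma1 t) = 0.
Proof.
  intros Ht; rewrite mink_accel, mink_gamma2_gamma1, (mink_sym n (gamma t)), mink_gamma1_gamma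
    by exact Ht; ring.
Qed.

Lemma mink_accel_self_le t : a <= t <= b -> mink n (accel t) (accel t) <= K * K.
Proof.
  intros Ht; pose proof (curvature_le t Ht) as Hc; unfold geod_curvature in Hc; fold (accel t) in Hc.
  destruct (Rle_lt_dec (mink n (accel t) (accel t)) 0) as [Hle|Hpos]; [nra|].
  pose proof (sqrt_sqrt _ (Rlt_le _ _ Hpos)); pose proof (sqrt_pos (mink n (accel t) (accel t))).
  nra.
Qed.

(* The component of [p] orthogonal to [gamma t] and [gamma1 t]. *)
Let transverse t (p : point) : point :=
  fun i => p i + mink n p (gamma t) * gamma t i + (- mink n p (gamma1 t)) * gamma1 t i.

Lemma mink_transverse_gamma t p : a <= t <= b -> mink n (transverse t p) (gamma t) = 0.
Proof.
  intros Ht; unfold transverse.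
  rewrite !mink_addl, !mink_scall, mink_gamma_self, mink_gamma1_gamma by exact Ht; ring.
Qed.

Lemma mink_transverse_self t p : a <= t <= b ->
  mink n (transverse t p) (transverse t p)
  = mink n p p + mink n p (gamma t) * mink n p (gamma t) - mink n p (gamma1 t) * mink n p (gamma1 t).
Proof.
  intros Ht; unfold transverse; rewrite !mink_addl, !mink_scall, !mink_addr, !mink_scalr.
  rewrite mink_gamma_self, mink_gamma1_gamma, (mink_sym n (gamma t) (gamma1 t)), mink_gamma1_gamma,
    gamma1_unit, (mink_sym n (gamma t) p), (mink_sym n (gamma1 t) p) by exact Ht.
  ring.
Qed.

Lemma mink_accel_transverse t p : a <= t <= b ->
  mink n (accel t) (transverse t p) = mink n (accel t) p.
Proof.
  intros Ht; unfold transverse.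
  rewrite !mink_addr, !mink_scalr, mink_accel_gamma, mink_accel_gamma1 by exact Ht; ring.
Qed.

Lemma transverse_sq_ge0 t p : a <= t <= b ->
  0 <= mink n p p + mink n p (gamma t) * mink n p (gamma t) - mink n p (gamma1 t) * mink n p (gamma1 t).
Proof.
  intros Ht; rewrite <- mink_transverse_self by exact Ht.
  apply (mink_self_ge0_of_orth n (gamma t)); [apply mink_gamma_self|apply mink_transverse_gamma]; exact Ht.
Qed.

Lemma mink_accel_sq_le t p : a <= t <= b ->
  mink n (accel t) p * mink n (accel t) p <=
  K * K * (mink n p p + mink n p (gamma t) * mink n p (gamma t) - mink n p (gamma1 t) * mink n p (gamma1 t)).
Proof.
  intros Ht; rewrite <- mink_accel_transverse, <- mink_transverse_self by exact Ht.
  pose proof (mink_cauchy_schwarz_orth n (gamma t) (accel t) (transverse t p)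
                (mink_gamma_self t Ht) (mink_accel_gamma t Ht) (mink_transverse_gamma t p Ht)).
  pose proof (mink_accel_self_le t Ht).
  pose proof (mink_self_ge0_of_orth n (gamma t) (transverse t p)
                (mink_gamma_self t Ht) (mink_transverse_gamma t p Ht)).
  nra.
Qed.

(* For a unit spacelike [z], [mink n p z] is the sinh of the signed distance from
   [p] to the hyperplane [z^perp].  Along the curve its second derivative is
   positive wherever it exceeds [sinh_radius K], so it has no interior maximum there. *)
Lemma height_le_sinh_radius z : mink n z z = 1 ->
  mink n (gamma a) z <= sinh_radius K -> mink n (gamma b) z <= sinh_radius K ->
  forall t, a <= t <= b -> mink n (gamma t) z <= sinh_radius K.
Proof.
  intros Hz Ha Hb t Ht.
  set (v s := mink n (gamma s) z).
  destruct (continuity_ab_maj v a b) as (m & Hmax & Hm); [lra|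
    intros s Hs; exact (continuity_pt_of_is_derive _ _ _ (is_derive_mink_gamma z s Hs))|].
  apply Rle_trans with (v m); [apply Hmax, Ht|].
  apply Rnot_lt_le; intros Hvm.
  destruct (sinh_radius_spec K K_range) as [Hh0 Hh].
  assert (Hm_int : a < m < b).
  { split; apply Rnot_le_lt; intros Hle;
      [replace m with a in Hvm by lra|replace m with b in Hvm by lra]; unfold v in Hvm; lra. }
  assert (Hv2 : 0 < mink n (gamma2 m) z).
  { pose proof (mink_accel_sq_le m z ltac:(lra)) as Hcs.
    rewrite mink_accel, Hz, (mink_sym n z (gamma m)), (mink_sym n z (gamma1 m)) in Hcs by lra.
    fold (v m) in Hcs.
    assert (K * K * (1 + v m * v m) < v m * v m) by nra.
    apply Rnot_le_lt; intros Hle; nra. }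
  destruct (second_derive_pos_not_max v (fun s => mink n (gamma1 s) z) a b m (mink n (gamma2 m) z))
    as (s & Hs & Hvs); [exact Hm_int|exact (fun s Hs => is_derive_mink_gamma z s Hs)|
                        apply is_derive_mink_gamma1; lra|exact Hv2|].
  pose proof (Hmax s Hs); lra.
Qed.

Lemma hdist_gamma_bounds s t : a <= s < t -> t <= b ->
  sqrt (1 - K * K) * (t - s) <= hdist n (gamma s) (gamma t) <= t - s.
Proof.
  intros Hs Ht; unfold hdist; rewrite mink_sym.
  apply (acosh_u_bounds K s b (fun σ => - mink n (gamma σ) (gamma s))
           (fun σ => - mink n (gamma1 σ) (gamma s)) (fun σ => - mink n (gamma2 σ) (gamma s)));
    [exact K_range|lra| | | | | | | |lra]; intros.
  - apply (is_derive_opp (fun σ => mink n (gamma σ) (gamma s))), is_derive_mink_gamma; lra.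
  - apply (is_derive_opp (fun σ => mink n (gamma1 σ) (gamma s))), is_derive_mink_gamma1; lra.
  - apply mink_opp_ge1; apply gamma_inH; lra.
  - rewrite mink_gamma_self by lra; ring.
  - rewrite mink_gamma1_gamma by lra; ring.
  - pose proof (transverse_sq_ge0 σ (gamma s) ltac:(lra)) as Htr.
    rewrite mink_gamma_self, (mink_sym n (gamma s) (gamma σ)), (mink_sym n (gamma s) (gamma1 σ))
      in Htr by lra.
    nra.
  - pose proof (mink_accel_sq_le σ (gamma s) ltac:(lra)) as Hacc.
    rewrite mink_accel, mink_gamma_self, (mink_sym n (gamma s) (gamma σ)), (mink_sym n (gamma s) (gamma1 σ))
      in Hacc by lra.
    replace (- mink n (gamma σ) (gamma s) - - mink n (gamma2 σ) (gamma s))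
      with (mink n (gamma2 σ) (gamma s) - mink n (gamma σ) (gamma s)) by ring.
    nra.
Qed.

Lemma gamma_quasi_geodesic : quasi_geodesic n (/ sqrt (1 - K ^ 2)) gamma a b.
Proof.
  intros s t Hs Ht; rewrite Rinv_inv.
  replace (K ^ 2) with (K * K) by ring.
  destruct K_range as [HK0 HK1].
  assert (Hc : 0 < sqrt (1 - K * K)) by (apply sqrt_lt_R0; nra).
  assert (Hcc : sqrt (1 - K * K) * sqrt (1 - K * K) = 1 - K * K) by (apply sqrt_sqrt; nra).
  assert (Hc1 : sqrt (1 - K * K) <= 1) by nra.
  assert (Hinv : 1 <= / sqrt (1 - K * K))
    by (rewrite <- Rinv_1 at 1; apply Rinv_le_contravar; lra).
  destruct (Rtotal_order s t) as [Hst|[<-|Hts]].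
  - pose proof (hdist_gamma_bounds s t ltac:(lra) ltac:(lra)).
    rewrite Rabs_left, Ropp_minus_distr by lra; split; [lra|nra].
  - rewrite Rminus_eq_0, Rabs_R0, !Rmult_0_r, hdist_self by (apply gamma_inH; exact Hs); lra.
  - pose proof (hdist_gamma_bounds t s ltac:(lra) ltac:(lra)).
    rewrite hdist_sym, Rabs_right by lra; split; [lra|nra].
Qed.

Section GeodesicFrame.

Let x := gamma a.
Let y := gamma b.
Let D := hdist n x y.
Let X := - mink n x y.
Let Y := sqrt (X * X - 1).
Let h := sinh_radius K.
(* The unit tangent at [x] of the geodesic towards [y]. *)
Let e : point := fun i => / Y * y i + (- X / Y) * x i.

Let geodesic_length_pos : 0 < D.
Proof.
  pose proof (hdist_gamma_bounds a b ltac:(lra) ltac:(lra)) as [Hlow _].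
  assert (0 < sqrt (1 - K * K)) by (destruct K_range; apply sqrt_lt_R0; nra).
  assert (0 < sqrt (1 - K * K) * (b - a)) by (apply Rmult_lt_0_compat; lra).
  unfold D, x, y; lra.
Qed.

Let X_gt1 : 1 < X.
Proof.
  assert (HX : 1 <= X) by (apply mink_opp_ge1; apply gamma_inH; lra).
  destruct (Req_dec X 1) as [HX1|]; [|lra].
  pose proof geodesic_length_pos.
  assert (HD : D = acosh X) by reflexivity.
  rewrite HD, HX1, acosh_1 in *; lra.
Qed.

Let Y_pos : 0 < Y.
Proof. pose proof X_gt1; apply sqrt_lt_R0; nra. Qed.

Let Y_sq : Y * Y = X * X - 1.
Proof. pose proof X_gt1; apply sqrt_sqrt; nra. Qed.

Let cosh_D : cosh D = X.
Proof. pose proof X_gt1; change D with (acosh X); rewrite cosh_acosh; lra. Qed.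

Let sinh_D : sinh D = Y.
Proof. pose proof X_gt1; change D with (acosh X); rewrite sinh_acosh; [reflexivity|lra]. Qed.

Let geod_pt_frame σ i : geod_pt n x y σ i = cosh σ * x i + sinh σ * e i.
Proof.
  pose proof Y_pos; unfold geod_pt, e; fold D; rewrite cosh_D, sinh_D; field; lra.
Qed.

Let mink_x_x : mink n x x = -1.
Proof. apply mink_gamma_self; lra. Qed.

Let mink_y_y : mink n y y = -1.
Proof. apply mink_gamma_self; lra. Qed.

Let mink_x_e : mink n x e = 0.
Proof.
  pose proof Y_pos; unfold e; rewrite mink_combr, mink_x_x; fold X.
  replace (mink n x y) with (- X) by (unfold X; ring); field; lra.
Qed.

Let mink_y_e : mink n y e = Y.
Proof.
  pose proof Y_pos; pose proof Y_sq; unfold e; rewrite mink_combr, mink_y_y, mink_sym.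
  replace (mink n x y) with (- X) by (unfold X; ring).
  apply Rmult_eq_reg_r with Y; [|lra]; field_simplify; [nra|lra].
Qed.

Let mink_e_e : mink n e e = 1.
Proof.
  pose proof Y_pos; unfold e at 1; rewrite mink_combl, mink_y_e, mink_x_e; field; lra.
Qed.

Let mink_gamma_geod t σ :
  - mink n (gamma t) (geod_pt n x y σ)
  = - mink n (gamma t) x * cosh σ - mink n (gamma t) e * sinh σ.
Proof.
  rewrite (mink_ext n (gamma t) (gamma t) (geod_pt n x y σ) (fun i => cosh σ * x i + sinh σ * e i))
    by (intros; auto using geod_pt_frame).
  rewrite mink_combr; ring.
Qed.

Let mink_y_frame w : mink n y w = X * mink n x w + Y * mink n e w.
Proof.
  pose proof Y_pos.
  rewrite (mink_ext n y (fun i => X * x i + Y * e i) w w) by (intros; auto; unfold e; field; lra).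
  apply mink_combl.
Qed.

Let h_nonneg : 0 <= h.
Proof. exact (proj1 (sinh_radius_spec K K_range)). Qed.

Let height_le_of_orth z : mink n z z = 1 -> mink n x z = 0 -> mink n e z = 0 ->
  forall t, a <= t <= b -> mink n (gamma t) z <= h.
Proof.
  intros Hzz Hxz Hez; pose proof h_nonneg.
  apply height_le_sinh_radius; [exact Hzz|change (mink n x z <= h); lra|].
  change (mink n y z <= h); rewrite mink_y_frame, Hxz, Hez; lra.
Qed.

(* Apply [height_le_of_orth] to the normalised component of [gamma t] orthogonal
   to the plane of the geodesic. *)
Let off_geodesic_le t : a <= t <= b ->
  mink n (gamma t) x * mink n (gamma t) x - mink n (gamma t) e * mink n (gamma t) e - 1 <= h * h.
Proof.
  intros Ht.
  set (p := gamma t); set (A := - mink n p x); set (B := mink n p e); set (u := A * A - B * B - 1).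
  assert (Hpp : mink n p p = -1) by (apply mink_gamma_self; exact Ht).
  set (q := fun i => p i + (- A) * x i + (- B) * e i).
  assert (Hqx : mink n q x = 0).
  { unfold q; rewrite !mink_addl, !mink_scall, (mink_sym n e x), mink_x_e, mink_x_x; unfold A; ring. }
  assert (Hqe : mink n q e = 0).
  { unfold q; rewrite !mink_addl, !mink_scall, mink_x_e, mink_e_e; unfold B; ring. }
  assert (Hqp : mink n q p = u).
  { unfold q; rewrite !mink_addl, !mink_scall, (mink_sym n x p), (mink_sym n e p), Hpp.
    unfold u, A, B; ring. }
  assert (Hqq : mink n q q = u).
  { unfold q at 2; rewrite !mink_addr, !mink_scalr, Hqx, Hqe, Hqp; ring. }
  replace (mink n p x * mink n p x) with (A * A) by (unfold A; ring); fold u.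
  apply Rnot_lt_le; intros Hu; pose proof h_nonneg.
  assert (Hu0 : 0 < u) by nra.
  pose proof (sqrt_lt_R0 u Hu0) as Hsu; pose proof (sqrt_sqrt u (Rlt_le _ _ Hu0)) as Hsu2.
  set (z := fun i => / sqrt u * q i).
  assert (Hzz : mink n z z = 1)
    by (unfold z; rewrite mink_scall, mink_scalr, Hqq;
        transitivity (u / (sqrt u * sqrt u)); [field; lra|rewrite Hsu2; field; lra]).
  pose proof (height_le_of_orth z Hzz
                ltac:(unfold z; rewrite mink_scalr, mink_sym, Hqx; ring)
                ltac:(unfold z; rewrite mink_scalr, mink_sym, Hqe; ring) t Ht) as Hpz.
  change (mink n p z <= h) in Hpz; unfold z in Hpz; rewrite mink_scalr, mink_sym, Hqp in Hpz.
  replace (/ sqrt u * u) with (sqrt u) in Hpz 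
    by (transitivity (sqrt u * sqrt u / sqrt u); [field; lra|rewrite Hsu2; field; lra]).
  nra.
Qed.

(* [e] and [Y x + X e] are the unit tangents of the geodesic at its ends: the curve
   does not go further than height [h] past either end. *)
Let before_start_le t : a <= t <= b -> - h <= mink n (gamma t) e.
Proof.
  intros Ht; pose proof h_nonneg; pose proof Y_pos.
  set (z := fun i => -1 * e i).
  assert (Hzz : mink n z z = 1) by (unfold z; rewrite mink_scall, mink_scalr, mink_e_e; ring).
  pose proof (height_le_sinh_radius z Hzz
                ltac:(change (mink n x z <= h); unfold z; rewrite mink_scalr, mink_x_e; lra)
                ltac:(change (mink n y z <= h); unfold z; rewrite mink_scalr, mink_y_e; lra) t Ht)
    as Hz.
  unfold z in Hz; rewrite mink_scalr in Hz; fold h in Hz; lra.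
Qed.

Let beyond_end_le t : a <= t <= b ->
  X * mink n (gamma t) e + Y * mink n (gamma t) x <= h.
Proof.
  intros Ht; pose proof h_nonneg; pose proof Y_pos; pose proof Y_sq.
  set (z := fun i => Y * x i + X * e i).
  assert (Hzz : mink n z z = 1).
  { unfold z; rewrite mink_combl, !mink_combr, mink_x_x, mink_e_e, mink_x_e, (mink_sym n e x), mink_x_e.
    nra. }
  pose proof (height_le_sinh_radius z Hzz
                ltac:(change (mink n x z <= h); unfold z; rewrite mink_combr, mink_x_x, mink_x_e; nra)
                ltac:(change (mink n y z <= h); unfold z;
                      rewrite mink_combr, mink_y_e, (mink_sym n y x); unfold X; nra) t Ht)
    as Hz.
  unfold z in Hz; rewrite mink_combr in Hz; fold h in Hz; lra.
Qed.

(* With [A = - mink n (gamma t) x] and [B = mink n (gamma t) e], the cosh of the distance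
   [A cosh σ - B sinh σ] to the geodesic line is least where [B cosh σ = A sinh σ];
   take that parameter, clamped to [[0, D]]. *)
Lemma near_geodesic_point t : a <= t <= b -> exists σ, 0 <= σ <= D /\
  mink n (gamma t) (geod_pt n x y σ) * mink n (gamma t) (geod_pt n x y σ) <= 1 + 2 * (h * h).
Proof.
  intros Ht.
  pose proof (off_geodesic_le t Ht); pose proof (before_start_le t Ht); pose proof (beyond_end_le t Ht).
  pose proof h_nonneg; pose proof geodesic_length_pos; pose proof X_gt1; pose proof Y_pos.
  assert (Hval : forall σ, mink n (gamma t) (geod_pt n x y σ) * mink n (gamma t) (geod_pt n x y σ)
            = (- mink n (gamma t) x * cosh σ - mink n (gamma t) e * sinh σ)
              * (- mink n (gamma t) x * cosh σ - mink n (gamma t) e * sinh σ))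
    by (intros σ; rewrite <- mink_gamma_geod; ring).
  set (A := - mink n (gamma t) x) in *; set (B := mink n (gamma t) e) in *.
  assert (HmA : mink n (gamma t) x = - A) by (unfold A; ring); rewrite HmA in *.
  destruct (Rle_lt_dec B 0) as [HB|HB].
  - exists 0; split; [lra|]; rewrite Hval, cosh_0, sinh_0; nra.
  - destruct (Rle_lt_dec 0 (X * B - Y * A)) as [HBD|HBD].
    + exists D; split; [lra|]; rewrite Hval, cosh_D, sinh_D.
      pose proof (hyperbolic_rotation_sq A B X Y ltac:(pose proof Y_sq; lra)); nra.
    + destruct (IVT_closed (fun σ => A * sinh σ - B * cosh σ) 0 D) as (σ & Hσ & Hσ0);
        [lra| |rewrite sinh_0, cosh_0; lra|rewrite sinh_D, cosh_D; lra|].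
      * intros σ _; apply (continuity_pt_of_is_derive _ σ (A * cosh σ - B * sinh σ)).
        apply (is_derive_minus (fun σ => A * sinh σ) (fun σ => B * cosh σ));
          apply is_derive_scal, is_derive_Reals;
          [apply derivable_pt_lim_sinh|apply derivable_pt_lim_cosh].
      * exists σ; split; [exact Hσ|]; rewrite Hval.
        pose proof (hyperbolic_rotation_sq A B (cosh σ) (sinh σ) (cosh_sq_sub_sinh_sq σ)).
        cbv beta in Hσ0; nra.
Qed.

Lemma near_curve_point σ : 0 <= σ <= D -> exists t, a <= t <= b /\
  mink n (gamma t) (geod_pt n x y σ) * mink n (gamma t) (geod_pt n x y σ) <= 1 + h * h.
Proof.
  intros Hσ; pose proof Y_pos.
  set (eσ := fun i => sinh σ * x i + cosh σ * e i).
  destruct (IVT_closed (fun t => mink n (gamma t) eσ) a b) as (t & Ht & Ht0); [lra| | | |].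
  - intros t Ht; exact (continuity_pt_of_is_derive _ _ _ (is_derive_mink_gamma eσ t Ht)).
  - change (mink n x eσ <= 0); unfold eσ; rewrite mink_combr, mink_x_x, mink_x_e.
    pose proof (sinh_ge0 σ ltac:(lra)); lra.
  - change (0 <= mink n y eσ); unfold eσ; rewrite mink_combr, mink_y_e, mink_sym.
    replace (mink n x y) with (- X) by (unfold X; ring).
    pose proof (sinh_ge0 (D - σ) ltac:(lra)) as Hs; rewrite sinh_sub, cosh_D, sinh_D in Hs; lra.
  - exists t; split; [exact Ht|].
    pose proof (off_geodesic_le t Ht).
    pose proof (hyperbolic_rotation_sq (- mink n (gamma t) x) (mink n (gamma t) e) (cosh σ) (sinh σ)
                  (cosh_sq_sub_sinh_sq σ)).
    cbv beta in Ht0; unfold eσ in Ht0; rewrite mink_combr in Ht0.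
    rewrite <- (Ropp_involutive (mink n (gamma t) (geod_pt n x y σ))), mink_gamma_geod.
    nra.
Qed.

End GeodesicFrame.

Lemma gamma_hausdorff_geodesic :
  hausdorff_dist_le n (path_image gamma a b) (geodesic_segment_image n (gamma a) (gamma b))
    (hausdorff_bound K).
Proof.
  destruct (sinh_radius_spec K K_range) as [Hh0 _].
  split.
  - intros p (t & Ht & ->) eps Heps.
    destruct (near_geodesic_point t Ht) as (σ & Hσ & Hsq).
    exists (geod_pt n (gamma a) (gamma b) σ); split; [exists σ; split; [exact Hσ|reflexivity]|].
    enough (hdist n (gamma t) (geod_pt n (gamma a) (gamma b) σ) <= hausdorff_bound K) by lra.
    apply acosh_le_of_sq_le; nra.
  - intros q (σ & Hσ & ->) eps Heps.
    destruct (near_curve_point σ Hσ) as (t & Ht & Hsq).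
    exists (gamma t); split; [exists t; split; [exact Ht|reflexivity]|].
    enough (hdist n (gamma t) (geod_pt n (gamma a) (gamma b) σ) <= hausdorff_bound K)
      by (rewrite hdist_sym; lra).
    apply acosh_le_of_sq_le; nra.
Qed.

End Curve.

Lemma continuity_pt_hausdorff_bound K : 0 <= K < 1 -> continuity_pt hausdorff_bound K.
Proof.
  intros HK; unfold hausdorff_bound.
  assert (Hr : 1 <= sqrt (1 + 2 * (sinh_radius K * sinh_radius K))) by (apply sqrt_ge1; nra).
  apply (continuity_pt_comp (fun K => sqrt (1 + 2 * (sinh_radius K * sinh_radius K))) acosh);
    [|exact (continuity_pt_acosh _ Hr)].
  assert (Hc : 0 < sqrt (1 - K * K)) by (apply sqrt_lt_R0; nra).
  eapply continuity_pt_of_is_derive; unfold sinh_radius; auto_derive; [|reflexivity].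
  change (1 + - (K * K)) with (1 - K * K).
  repeat split; try lra; try nra.
Qed.

Lemma hausdorff_bound_nonneg K : 0 <= K < 1 -> 0 <= hausdorff_bound K.
Proof.
  intros HK; rewrite <- acosh_1; unfold hausdorff_bound.
  assert (Hr : 1 <= sqrt (1 + 2 * (sinh_radius K * sinh_radius K))) by (apply sqrt_ge1; nra).
  apply acosh_le_acosh; exact Hr.
Qed.

Lemma hausdorff_bound_0 : hausdorff_bound 0 = 0.
Proof.
  unfold hausdorff_bound, sinh_radius; rewrite Rdiv_0_l, Rmult_0_r, Rmult_0_r, Rplus_0_r, sqrt_1.
  exact acosh_1.
Qed.

Theorem mainTheorem12 :
  exists f : R -> R,
    (forall x, 0 <= x < 1 -> forall eps, 0 < eps -> exists delta, 0 < delta /\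
       forall y, 0 <= y < 1 -> Rabs (y - x) < delta -> Rabs (f y - f x) < eps) /\
    (forall x, 0 <= x < 1 -> 0 <= f x) /\
    f 0 = 0 /\
    forall (n : nat) (K a b : R) (gamma gamma1 gamma2 : R -> point),
      0 <= K < 1 ->
      a < b ->
      (forall t, a <= t <= b -> inH n (gamma t)) ->
      (forall t i, a <= t <= b -> (i <= n)%nat ->
         is_derive (fun s => gamma s i) t (gamma1 t i)) ->
      (forall t i, a <= t <= b -> (i <= n)%nat ->
         is_derive (fun s => gamma1 s i) t (gamma2 t i)) ->
      (forall t, a <= t <= b -> mink n (gamma1 t) (gamma1 t) = 1) ->
      (forall t, a <= t <= b -> geod_curvature n gamma gamma2 t <= K) ->
      quasi_geodesic n (/ sqrt (1 - K ^ 2)) gamma a b /\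
      hausdorff_dist_le n (path_image gamma a b)
        (geodesic_segment_image n (gamma a) (gamma b)) (f K).
Proof.
  exists hausdorff_bound; split; [|split; [|split]].
  - intros x Hx eps Heps.
    destruct (continuity_pt_hausdorff_bound x Hx eps Heps) as (delta & Hdelta & Hnear).
    exists delta; split; [exact Hdelta|]; intros y Hy Hyx.
    destruct (Req_dec y x) as [->|Hne]; [rewrite Rminus_eq_0, Rabs_R0; exact Heps|].
    apply (Hnear y); repeat split; auto.
  - exact hausdorff_bound_nonneg.
  - exact hausdorff_bound_0.
  - intros n K a b gamma gamma1 gamma2 HK Hab Hin Hd1 Hd2 Hunit Hcurv; split.
    + exact (gamma_quasi_geodesic n K a b gamma gamma1 gamma2 HK Hab Hin Hd1 Hd2 Hunit Hcurv).
    + exact (gamma_hausdorff_geodesic n K a b gamma gamma1 gamma2 HK Hab Hin Hd1 Hd2 Hunit Hcurv).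
Qed.
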